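(* Let $I$ be an instance and let $\sigma+e$ be an $I$-feasible event sequence, where $e$ is a single event. Then for each $I$-feasible event sequence $\sigma'$ that contains all events of $\sigma$ but does not contain $e$, the sequence $\sigma'+e$ is $I$-feasible.
   Context: An instance $I$ consists of finite disjoint sets $R$ (residents) and $H$ (hospitals), a positive integer quota $q_h$ for each $h\in H$, for each $r\in R$ a preference list of $r$ (a sequence of distinct members of $H$, not necessarily all), and for each $h\in H$ a preference list of $h$ (a sequence of distinct members of $R$). A match is a pair $(r,h)\in R\times H$. For a set $M$ of matches, $\mathrm{res}_h M=\{r:(r,h)\in M\}$, $\mathrm{res}\,M=\{r:(r,h)\in M\text{ for some }h\}$. An event is $(r,h)^+$ (proposal) or $(r,h)^-$ (rejection); $+$ denotes concatenation/appending. For an event sequence $\sigma$, $\mathrm{prop}(\sigma)$, $\mathrm{rej}(\sigma)$ are the sets of matches proposed/rejected in $\sigma$ and $\mathrm{tent}(\sigma)=\mathrm{prop}(\sigma)\setminus\mathrm{rej}(\sigma)$. A match $(r,h)\in M$ is ousted from $M$ in $I$ if the list of $h$ in $I$ contains at least $q_h$ residents of $\mathrm{res}_h M$ and either $r$ is not on it or $r$ is preceded on it by at least $q_h$ residents of $\mathrm{res}_h M$. $I$-feasible sequences are defined inductively: the empty sequence is $I$-feasible; if $\sigma$ is $I$-feasible then $\sigma+(r,h)^+$ is $I$-feasible if $r\notin\mathrm{res}\,\mathrm{tent}(\sigma)$, $(r,h)\notin\mathrm{prop}(\sigma)$, $h$ is on the list of $r$ in $I$ and $(r,h')\in\mathrm{rej}(\sigma)$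 for every $h'$ preceding $h$ on it; and $\sigma+(r,h)^-$ is $I$-feasible if $(r,h)$ is ousted from $\mathrm{prop}(\sigma)$ in $I$ and $(r,h)\notin\mathrm{rej}(\sigma)$. *)

From mathcomp Require Import all_boot.
Set Implicit Arguments. Unset Strict Implicit. Unset Printing Implicit Defensive.

(* Residents and hospitals are two distinct finite types (hence disjoint). *)
Record instance (R H : finType) := Instance {
  quota : H -> nat;
  quota_pos : forall h, 0 < quota h;
  rpref : R -> seq H;
  rpref_uniq : forall r, uniq (rpref r);
  hpref : H -> seq R;
  hpref_uniq : forall h, uniq (hpref h)
}.

Section Defs.
Variables (R H : finType).

(* A match is a pair (r,h); an event is a match together with a sign:
   true = proposal (r,h)^+, false = rejection (r,h)^-. *)
Definition event : finType := ((R * H) * bool)%type.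
Definition propose (r : R) (h : H) : event := ((r, h), true).
Definition reject (r : R) (h : H) : event := ((r, h), false).

Definition prop (s : seq event) : {set R * H} := [set m | (m, true) \in s].
Definition rej (s : seq event) : {set R * H} := [set m | (m, false) \in s].
Definition tent (s : seq event) : {set R * H} := prop s :\: rej s.

Definition res_h (M : {set R * H}) (h : H) : {set R} := [set r | (r, h) \in M].
Definition res (M : {set R * H}) : {set R} := [set r | [exists h, (r, h) \in M]].

Definition cnt_res (M : {set R * H}) (h : H) (l : seq R) : nat :=
  count (fun r' => r' \in res_h M h) l.

Definition ousted (I : instance R H) (M : {set R * H}) (r : R) (h : H) : bool :=
  let l := hpref I h in
  [&& (r, h) \in M,
      quota I h <= cnt_res M h l &
      (r \notin l) || (quota I h <= cnt_res M h (take (index r l) l))].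

(* I-feasible event sequences; "+" is appending (rcons). *)
Inductive feasible (I : instance R H) : seq event -> Prop :=
| feasible_nil : feasible I [::]
| feasible_prop (s : seq event) (r : R) (h : H) :
    feasible I s ->
    r \notin res (tent s) ->
    (r, h) \notin prop s ->
    h \in rpref I r ->
    (forall h', h' \in take (index h (rpref I r)) (rpref I r) -> (r, h') \in rej s) ->
    feasible I (rcons s (propose r h))
| feasible_rej (s : seq event) (r : R) (h : H) :
    feasible I s ->
    ousted I (prop s) r h ->
    (r, h) \notin rej s ->
    feasible I (rcons s (reject r h)).

End Defs.

(** Feasibility of the new event only depends on monotone information.  A
    rejection needs its match to be ousted, and oustedness only grows with the
    set of proposals.  A proposal of r to h needs the earlier hospitals of r to
    be rejected, which transfers from s to s', and r to be free in s': if r were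
    tentatively held by h2 in s', then h2 cannot precede h (it is rejected
    already in s), cannot be h (that proposal is not in s'), and cannot follow h,
    since proposing to h2 requires h to be rejected, hence proposed, in s'. *)

From mathcomp Require Import all_boot.

Set Implicit Arguments.
Unset Strict Implicit.
Unset Printing Implicit Defensive.

Section Feasibility.
Variables (R H : finType) (I : instance R H).
Implicit Types (s t : seq (event R H)) (M N : {set R * H}) (r : R) (h : H).

Lemma prop_subset s t : {subset s <= t} -> prop s \subset prop t.
Proof. by move=> st; apply/subsetP=> m; rewrite !inE => /st. Qed.

Lemma rej_subset s t : {subset s <= t} -> rej s \subset rej t.
Proof. by move=> st; apply/subsetP=> m; rewrite !inE => /st. Qed.

Lemma cnt_res_subset M N h l : M \subset N -> cnt_res M h l <= cnt_res N h l.
Proof.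
move=> sMN; apply: sub_count => x; rewrite !inE; exact: (subsetP sMN).
Qed.

Lemma ousted_subset M N r h : M \subset N -> ousted I M r h -> ousted I N r h.
Proof.
move=> sMN /and3P[Mrh quotaM before].
have le_cnt l : cnt_res M h l <= cnt_res N h l := cnt_res_subset h l sMN.
apply/and3P; split; first exact: (subsetP sMN).
  exact: leq_trans quotaM (le_cnt _).
case/orP: before => [-> // | quotaM']; apply/orP; right.
exact: leq_trans quotaM' (le_cnt _).
Qed.

Lemma feasible_rej_prop s : feasible I s -> rej s \subset prop s.
Proof.
elim=> [|t r h _ IH _ _ _ _|t r h _ IH /and3P[Mrh _ _] _].
- by apply/subsetP=> m; rewrite inE.
- apply/subsetP=> m; move/subsetP/(_ m): IH; rewrite !inE !mem_rcons !inE /=.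
  by move=> IH /orP[/eqP[] // | /IH ->]; rewrite orbT.
- apply/subsetP=> m; move/subsetP/(_ m): IH; move: Mrh; rewrite !inE !mem_rcons !inE /=.
  by move=> Mrh IH /orP[/eqP[->] | /IH ->]; rewrite ?Mrh orbT.
Qed.

Lemma feasible_prop_pref s r h : feasible I s -> (r, h) \in prop s ->
  forall h', h' \in take (index h (rpref I r)) (rpref I r) -> (r, h') \in rej s.
Proof.
have rej_rcons t e m : m \in rej t -> m \in rej (rcons t e).
  by rewrite !inE mem_rcons inE => ->; rewrite orbT.
elim=> [|t r1 h1 _ IH _ _ _ before|t r1 h1 _ IH _ _]; first by rewrite inE.
- rewrite [_ \in prop _]inE mem_rcons inE => /orP[/eqP[eq_r eq_h] | Ptrh] h' h'_before.
    by subst; exact/rej_rcons/before.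
  by apply/rej_rcons/IH; rewrite ?inE.
- rewrite [_ \in prop _]inE mem_rcons inE => /orP[/eqP[] // | Ptrh] h' h'_before.
  by apply/rej_rcons/IH; rewrite ?inE.
Qed.

Lemma feasible_pref s r h : feasible I s -> (r, h) \in prop s -> h \in rpref I r.
Proof.
elim=> [|t r1 h1 _ IH _ _ pref1 _|t r1 h1 _ IH _ _]; first by rewrite inE.
- rewrite [_ \in prop _]inE mem_rcons inE => /orP[/eqP[eq_r eq_h] | Ptrh].
    by subst.
  by apply: IH; rewrite inE.
- rewrite [_ \in prop _]inE mem_rcons inE => /orP[/eqP[] // | Ptrh].
  by apply: IH; rewrite inE.
Qed.

Lemma feasible_free_resident s r h : feasible I s -> h \in rpref I r ->
  (r, h) \notin prop s ->
  (forall h', h' \in take (index h (rpref I r)) (rpref I r) -> (r, h') \in rej s) ->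
  r \notin res (tent s).
Proof.
move=> Fs pref_h notP_h before; apply/negP; rewrite inE => /existsP[h2].
rewrite /tent in_setD => /andP[notR_h2 P_h2].
have pref_h2 := feasible_pref Fs P_h2.
have [lt_h2h | le_hh2] := ltnP (index h2 (rpref I r)) (index h (rpref I r)).
  by rewrite before ?in_take // in notR_h2.
have [eq_h2h | ne_h2h] := eqVneq h2 h; first by rewrite -eq_h2h P_h2 in notP_h.
have lt_hh2 : index h (rpref I r) < index h2 (rpref I r).
  rewrite ltn_neqAle le_hh2 andbT; apply: contra ne_h2h => /eqP eq_idx.
  by rewrite -(nth_index h pref_h) eq_idx nth_index.
have R_h : (r, h) \in rej s by apply: (feasible_prop_pref Fs P_h2); rewrite in_take.
by rewrite (subsetP (feasible_rej_prop Fs) _ R_h) in notP_h.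
Qed.

Lemma feasible_rcons_proposeE s r h : feasible I (rcons s (propose r h)) ->
  h \in rpref I r /\
  forall h', h' \in take (index h (rpref I r)) (rpref I r) -> (r, h') \in rej s.
Proof.
move E: (rcons s _) => u Fu; case: Fu E => [|t r1 h1 _ _ _ pref before|t r1 h1 _ _ _].
- by case: s.
- by case/rcons_inj=> -> -> ->.
- by case/rcons_inj.
Qed.

Lemma feasible_rcons_rejectE s r h : feasible I (rcons s (reject r h)) ->
  ousted I (prop s) r h.
Proof.
move E: (rcons s _) => u Fu; case: Fu E => [|t r1 h1 _ _ _ _ _|t r1 h1 _ ousted_t _].
- by case: s.
- by case/rcons_inj.
- by case/rcons_inj=> -> -> ->.
Qed.

End Feasibility.

Theorem proposition1 (R H : finType) (I : instance R H)
    (s : seq (event R H)) (e : event R H) :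
  feasible I (rcons s e) ->
  forall s' : seq (event R H),
    feasible I s' ->
    (forall x, x \in s -> x \in s') ->
    e \notin s' ->
    feasible I (rcons s' e).
Proof.
case: e => [[r h] []] Fse s' Fs' sub notin_e.
- have [pref_h before] := feasible_rcons_proposeE Fse.
  have before' h' (h'_before : h' \in take (index h (rpref I r)) (rpref I r)) :
      (r, h') \in rej s' by exact: subsetP (rej_subset sub) _ (before h' h'_before).
  have notP_h : (r, h) \notin prop s' by rewrite inE.
  exact: feasible_prop (feasible_free_resident Fs' pref_h notP_h before') notP_h pref_h before'.
- apply: feasible_rej => //; last by rewrite inE.
  exact: ousted_subset (prop_subset sub) (feasible_rcons_rejectE Fse).
Qed.
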